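(* Let $w$ be a $\gamma$-stable instance of MAXCUT and let $w'$ be obtained from $w$ by merging two vertices $u,v$ that lie on the same side of $w$'s maximal cut. Then $w'$ is $\gamma$-stable and its maximal cut is the one induced from $w$'s maximal cut.
   Context: An instance of MAXCUT is a finite vertex set $V$ with a symmetric $w:V\times V\to[0,\infty)$ with zero diagonal. A $\gamma$-perturbation of $w$ is $w'$ with $w(a,b)\le w'(a,b)\le\gamma w(a,b)$ for all $a,b$; $w$ is $\gamma$-stable if some cut is maximal for every $\gamma$-perturbation (for $\gamma>1$ this cut is the unique maximal cut). Merging $u,v\in V$ gives the instance on $V'=(V\setminus\{u,v\})\cup\{v'\}$ with $w'(x,y)=w(x,y)$ for $x,y\in V\setminus\{u,v\}$ and $w'(v',x)=w(v,x)+w(u,x)$. The induced cut places $v'$ on the common side of $u,v$ and every other vertex on its original side. *)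

From HB Require Import structures.
From mathcomp Require Import all_boot all_order all_algebra.
Set Implicit Arguments. Unset Strict Implicit. Unset Printing Implicit Defensive.
Import Order.TTheory GRing.Theory Num.Theory.
Local Open Scope ring_scope.

Section MaxCut.
Variable R : realFieldType.
Variable V : finType.

Definition maxcut_instance (w : V -> V -> R) : Prop :=
  [/\ forall a b, w a b = w b a, forall a, w a a = 0 & forall a b, 0 <= w a b].

Definition cut_value (w : V -> V -> R) (S : {set V}) : R :=
  \sum_(a in S) \sum_(b in ~: S) w a b.

Definition is_max_cut (w : V -> V -> R) (S : {set V}) : Prop :=
  forall T : {set V}, cut_value w T <= cut_value w S.

Definition perturbation (gamma : R) (w w' : V -> V -> R) : Prop :=
  (forall a b, w' a b = w' b a) /\
  (forall a b, w a b <= w' a b /\ w' a b <= gamma * w a b).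

Definition stable_cut (gamma : R) (w : V -> V -> R) (S : {set V}) : Prop :=
  forall w', perturbation gamma w w' -> is_max_cut w' S.

Definition gamma_stable (gamma : R) (w : V -> V -> R) : Prop :=
  exists S, stable_cut gamma w S.
End MaxCut.

Section Merge.
Variable R : realFieldType.
Variable V : finType.
Variables u v : V.

(* V' = (V \ {u,v}) ∪ {v'} : None is the merged vertex v'. *)
Definition merged_vertex : finType :=
  option {x : V | (x != u) && (x != v)}.

Definition merge_vertices (w : V -> V -> R) : merged_vertex -> merged_vertex -> R :=
  fun a b =>
    match a, b with
    | None, None => 0
    | None, Some y => w v (val y) + w u (val y)
    | Some x, None => w (val x) v + w (val x) u
    | Some x, Some y => w (val x) (val y)
    end.

Definition induced_cut (S : {set V}) : {set merged_vertex} :=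
  [set m : merged_vertex | if m is Some x then val x \in S else v \in S].
End Merge.

Arguments merged_vertex {V} u v.
Arguments merge_vertices {R V} u v w.
Arguments induced_cut {V} u v S.

From HB Require Import structures.
From mathcomp Require Import all_boot all_order all_algebra lra.
Set Implicit Arguments. Unset Strict Implicit. Unset Printing Implicit Defensive.
Import Order.TTheory GRing.Theory Num.Theory.
Local Open Scope ring_scope.

(* Every gamma-perturbation w2 of the merged instance lifts to a
   gamma-perturbation of w: the weight w2(v',x) is distributed over the edges
   (v,x) and (u,x) in proportion to w(v,x) and w(u,x), and the edge (u,v) keeps
   its weight.  The lift gives every cut of the merged instance the value of
   its preimage cut, and the preimage of the induced cut is the original
   maximal cut, so the stability of w transfers.  For gamma < 1 every
   perturbation is zero and there is nothing to prove. *)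

Section Perturbation.
Variables (R : realFieldType) (V : finType) (gamma : R) (w w' : V -> V -> R).

Lemma perturbation_eq0 a b :
  perturbation gamma w w' -> w a b = 0 -> w' a b = 0.
Proof.
move=> [_ /(_ a b) [lo hi]] w0; rewrite w0 mulr0 in hi; rewrite w0 in lo.
by apply/eqP; rewrite eq_le hi lo.
Qed.

Lemma perturbation_lt1_eq0 a b : gamma < 1 -> 0 <= w a b ->
  perturbation gamma w w' -> w' a b = 0.
Proof.
move=> g1 w_ge0 pert; apply: perturbation_eq0 => //.
have [lo hi] := pert.2 a b; apply/eqP; rewrite eq_le w_ge0 andbT; nra.
Qed.

End Perturbation.

Lemma cut_value_eq0 (R : realFieldType) (V : finType) (w : V -> V -> R)
    (S : {set V}) :
  (forall a b, w a b = 0) -> cut_value w S = 0.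
Proof. by move=> w0; rewrite /cut_value big1 // => a _; rewrite big1. Qed.

Lemma mul_ratio_eq (R : fieldType) (d c : R) :
  (d = 0 -> c = 0) -> d * (c / d) = c.
Proof.
have [-> /(_ erefl) ->|d0 _] := eqVneq d 0; first by rewrite mul0r.
by rewrite mulrC divfK.
Qed.

Lemma mul_ratio_bounds (R : realFieldType) (gamma p d c : R) :
  0 <= p -> p <= d -> d <= c -> c <= gamma * d ->
  p <= p * (c / d) /\ p * (c / d) <= gamma * p.
Proof.
move=> p0 pd dc cd; have [d0|d0] := eqVneq d 0.
  have -> : p = 0 by apply/eqP; rewrite eq_le p0 -d0 pd.
  by rewrite !mul0r mulr0.
have d_gt0 : 0 < d by rewrite lt_def d0 (le_trans p0 pd).
rewrite mulrA ler_pdivlMr // ler_pdivrMr //; split; nra.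
Qed.

Section Merge.
Variables (R : realFieldType) (V : finType) (u v : V).
Hypothesis uv : u != v.
Local Notation V' := (merged_vertex u v).

Definition merge_proj (a : V) : V' := insub a.

Lemma merge_proj_eqSome a x : (merge_proj a == Some x) = (a == val x).
Proof.
rewrite /merge_proj; case: insubP => [y _ <-|] //= nP.
by apply/esym/negP => /eqP Ea; move: nP; rewrite Ea (valP x).
Qed.

Lemma merge_proj_eqNone a : (merge_proj a == None) = (a == u) || (a == v).
Proof.
rewrite /merge_proj; case: insubP => [y /andP[/negbTE -> /negbTE ->]|] //=.
by rewrite negb_and !negbK.
Qed.

Lemma preimset_induced_cut (S : {set V}) :
  (u \in S) = (v \in S) -> merge_proj @^-1: induced_cut u v S = S.
Proof.
move=> uSvS; apply/setP => a; rewrite !inE.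
case Ea: (merge_proj a) => [x|] /=.
  by move/eqP: Ea; rewrite merge_proj_eqSome => /eqP ->.
by move/eqP: Ea; rewrite merge_proj_eqNone => /orP[] /eqP ->.
Qed.

Lemma big_preimset_fibers (G : V -> R) (B : {set V'}) :
  \sum_(a in merge_proj @^-1: B) G a =
  \sum_(a' in B) \sum_(a | merge_proj a == a') G a.
Proof.
rewrite (partition_big merge_proj (mem B)) => [|a]; last by rewrite inE.
apply: eq_bigr => a' Ba'; apply: eq_bigl => a; rewrite inE.
by case: eqP => [->|]; rewrite ?andbF ?andbT.
Qed.

Lemma sum_fiber_Some (G : V -> R) x :
  \sum_(a | merge_proj a == Some x) G a = G (val x).
Proof. by apply: big_pred1 => a; rewrite /= merge_proj_eqSome. Qed.

Lemma sum_fiber_None (G : V -> R) :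
  \sum_(a | merge_proj a == None) G a = G u + G v.
Proof.
rewrite (bigD1 u) ?merge_proj_eqNone ?eqxx //=; congr (_ + _).
apply: big_pred1 => a /=; rewrite merge_proj_eqNone.
case: (a =P v) => [->|_]; last by rewrite orbF andbN.
by rewrite orbT eq_sym uv.
Qed.

Section Lift.
Variable w : V -> V -> R.
Hypothesis w_inst : maxcut_instance w.

Lemma merge_vertices_instance : maxcut_instance (merge_vertices u v w).
Proof.
have [wC w0 w_ge0] := w_inst.
split=> [[x|] [y|]|[x|]|[x|] [y|]] //=; rewrite ?addr_ge0 //.
by rewrite wC [w u _]wC.
by rewrite wC [w _ u]wC.
Qed.

Lemma merge_vertices_sum_fibers a' b' : a' != b' ->
  \sum_(a | merge_proj a == a') \sum_(b | merge_proj b == b') w a b =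
  merge_vertices u v w a' b'.
Proof.
case: a' b' => [x|] [y|] // _; rewrite ?sum_fiber_Some ?sum_fiber_None //=.
- by rewrite addrC.
- by rewrite !sum_fiber_Some addrC.
Qed.

Lemma le_merge_vertices a b :
  ~~ ((merge_proj a == None) && (merge_proj b == None)) ->
  w a b <= merge_vertices u v w (merge_proj a) (merge_proj b).
Proof.
have [_ _ w_ge0] := w_inst.
case Ea: (merge_proj a) => [x|]; case Eb: (merge_proj b) => [y|] //= _;
  move: Ea Eb => /eqP Ea /eqP Eb.
- by move: Ea Eb; rewrite !merge_proj_eqSome => /eqP-> /eqP->.
- move: Ea Eb; rewrite merge_proj_eqSome merge_proj_eqNone => /eqP->.
  by case/orP=> /eqP->; rewrite ?lerDl ?lerDr.
- move: Ea Eb; rewrite merge_proj_eqSome merge_proj_eqNone => + /eqP->.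
  by case/orP=> /eqP->; rewrite ?lerDl ?lerDr.
Qed.

Variables (gamma : R) (w2 : V' -> V' -> R).
Hypothesis w2_pert : perturbation gamma (merge_vertices u v w) w2.

Definition lift_weight (a b : V) : R :=
  if (merge_proj a == None) && (merge_proj b == None) then w a b
  else w a b * (w2 (merge_proj a) (merge_proj b) /
                merge_vertices u v w (merge_proj a) (merge_proj b)).

Lemma lift_weight_perturbation : 1 <= gamma -> perturbation gamma w lift_weight.
Proof.
have [wC _ w_ge0] := w_inst; have [w2C w2_bnd] := w2_pert.
have [mC _ _] := merge_vertices_instance.
move=> g1; split=> a b; rewrite /lift_weight.
  by rewrite andbC wC mC w2C.
case: ifPn => [_|not_vv]; first by rewrite ler_peMl.
have [lo hi] := w2_bnd (merge_proj a) (merge_proj b).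
exact: mul_ratio_bounds (w_ge0 a b) (le_merge_vertices not_vv) lo hi.
Qed.

Lemma lift_weight_sum_fibers a' b' : a' != b' ->
  \sum_(a | merge_proj a == a') \sum_(b | merge_proj b == b') lift_weight a b =
  w2 a' b'.
Proof.
move=> a'b'.
have not_vv a b : merge_proj a = a' -> merge_proj b = b' ->
    ~~ ((merge_proj a == None) && (merge_proj b == None)).
  by move=> -> ->; apply: contra a'b' => /andP[/eqP-> /eqP->].
rewrite -[RHS](mul_ratio_eq (d := merge_vertices u v w a' b')); last first.
  exact: perturbation_eq0 w2_pert.
rewrite -{1}(merge_vertices_sum_fibers a'b') big_distrl /=.
apply: eq_bigr => a /eqP Ea; rewrite big_distrl /=.
apply: eq_bigr => b /eqP Eb.
by rewrite /lift_weight (negbTE (not_vv a b Ea Eb)) Ea Eb.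
Qed.

Lemma cut_value_lift_weight (T : {set V'}) :
  cut_value w2 T = cut_value lift_weight (merge_proj @^-1: T).
Proof.
rewrite /cut_value -preimsetC big_preimset_fibers.
apply: eq_bigr => a' Ta'.
under [RHS]eq_bigr do rewrite big_preimset_fibers.
rewrite exchange_big; apply: eq_bigr => b' Tb'.
rewrite lift_weight_sum_fibers //.
by apply: contraTneq Tb' => <-; rewrite inE negbK.
Qed.

End Lift.
End Merge.

Theorem mainTheorem11 (R : realFieldType) (V : finType) (gamma : R)
    (w : V -> V -> R) (u v : V) (S : {set V}) :
  maxcut_instance w ->
  u != v ->
  stable_cut gamma w S ->
  (u \in S) = (v \in S) ->
  gamma_stable gamma (merge_vertices u v w) /\
  stable_cut gamma (merge_vertices u v w) (induced_cut u v S).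
Proof.
move=> w_inst uv S_stable uSvS.
suff stable : stable_cut gamma (merge_vertices u v w) (induced_cut u v S).
  by split=> //; exists (induced_cut u v S).
move=> w2 w2_pert T; have [g1|g1] := lerP 1 gamma.
  rewrite !(cut_value_lift_weight uv w2_pert) preimset_induced_cut //.
  have lift_pert := lift_weight_perturbation w_inst w2_pert g1.
  exact: S_stable _ lift_pert (merge_proj u v @^-1: T).
have [_ _ m_ge0] := merge_vertices_instance u v w_inst.
have w2_0 a b : w2 a b = 0 := perturbation_lt1_eq0 g1 (m_ge0 a b) w2_pert.
by rewrite !(cut_value_eq0 _ w2_0).
Qed.
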